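(* Let $N\ge1$, $\varepsilon\in(0,1)$, $U\in C^\infty(\mathbb{R}^d)$ and $G\in C^\infty(\mathbb{R}^d\setminus\{0\})$. On $\mathbf{X}=\mathcal{D}\times(\mathbb{R}^d)^N$ consider the vector fields $X_0=\sum_{i=1}^N\frac{p_i}{\sqrt{1+\varepsilon|p_i|^2}}\partial_{q_i}+\sum_{i=1}^N\Big(-\frac{p_i}{\sqrt{1+\varepsilon|p_i|^2}}-\nabla U(q_i)-\sum_{j\ne i}\nabla G(q_i-q_j)\Big)\partial_{p_i}$ and $X_i=\partial_{p_i}$, $i=1,\dots,N$. Then the Lie algebra generated by the family $\{X_i\}_{i=1}^N$, $\{[X_i,X_j]\}_{i,j=0}^N$, $\{[[X_i,X_j],X_k]\}_{i,j,k=0}^N,\dots$ spans the tangent space $\mathbb{R}^{2dN}$ at every point of $\mathbf{X}$ (Hörmander's condition).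
   Context: $\mathcal{D}=\{\mathbf{q}=(q_1,\dots,q_N)\in(\mathbb{R}^d)^N: q_i\ne q_j\text{ for } i\ne j\}$. These vector fields are those for which the generator of the relativistic Langevin system $dq_i=\frac{p_i}{\sqrt{1+\varepsilon|p_i|^2}}dt$, $dp_i=-\frac{p_i}{\sqrt{1+\varepsilon|p_i|^2}}dt-\nabla U(q_i)dt-\sum_{j\ne i}\nabla G(q_i-q_j)dt+\sqrt2\,dW_i$ is $X_0+\sum_{i=1}^N X_i^2$ (with $X_i^2=\Delta_{p_i}$). *)

From HB Require Import structures.
From mathcomp Require Import all_boot all_order all_algebra.
From mathcomp Require Import all_classical all_reals all_analysis.
Set Implicit Arguments. Unset Strict Implicit. Unset Printing Implicit Defensive.
Import Order.TTheory GRing.Theory Num.Theory.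
Import numFieldNormedType.Exports.
Local Open Scope classical_set_scope.
Local Open Scope ring_scope.

Section Defs.
Variable R : realType.

Fixpoint iterD (V W : normedModType R) (vs : seq V) (f : V -> W) : V -> W :=
  match vs with
  | [::] => f
  | v :: vs' => fun x => 'D_v (iterD vs' f) x
  end.

Definition smooth_on (V W : normedModType R) (A : set V) (f : V -> W) :=
  forall (vs : seq V) (x : V), A x -> differentiable (iterD vs f) x.

Definition sqnorm (d : nat) (x : 'rV[R]_d) : R := \sum_(k < d) x ord0 k ^+ 2.

Definition grad (d : nat) (f : 'rV[R]_d -> R) (x : 'rV[R]_d) : 'rV[R]_d :=
  \row_(k < d) ('D_(delta_mx 0 k : 'rV[R]_d) f x).

(* State (and tangent) space: pairs (q, p) of N x d matrices; row i is q_i / p_i. *)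
Definition state (N d : nat) := ('M[R]_(N, d) * 'M[R]_(N, d))%type.

Definition config_dom (N d : nat) : set (state N d) :=
  [set z | forall i j : 'I_N, i != j -> row i z.1 != row j z.1].

Definition lie_bracket (V : normedModType R) (X Y : V -> V) : V -> V :=
  fun z => 'D_(X z) Y z - 'D_(Y z) X z.

Definition relvel (d : nat) (eps : R) (p : 'rV[R]_d) : 'rV[R]_d :=
  (Num.sqrt (1 + eps * sqnorm p))^-1 *: p.

Definition drift (N d : nat) (eps : R) (U G : 'rV[R]_d -> R)
  (z : state N d) : state N d :=
  (\matrix_(i < N) relvel eps (row i z.2),
   \matrix_(i < N) (- relvel eps (row i z.2) - grad U (row i z.1)
                    - \sum_(j < N | j != i) grad G (row i z.1 - row j z.1))).

(* The constant coordinate field d/dp_i^k (the components of X_i = d/dp_i). *)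
Definition dp (N d : nat) (i : 'I_N) (k : 'I_d) (z : state N d) : state N d :=
  (0, delta_mx i k).

Definition gen (N d : nat) (eps : R) (U G : 'rV[R]_d -> R)
  (a : option ('I_N * 'I_d)) : state N d -> state N d :=
  match a with
  | None => drift eps U G
  | Some (i, k) => dp i k
  end.

Inductive iter_br (N d : nat) (eps : R) (U G : 'rV[R]_d -> R) :
    (state N d -> state N d) -> Prop :=
  | ib2 a b : iter_br eps U G (lie_bracket (gen eps U G a) (gen eps U G b))
  | ibS Y c : iter_br eps U G Y ->
      iter_br eps U G (lie_bracket Y (gen eps U G c)).

Definition hormander_family (N d : nat) (eps : R) (U G : 'rV[R]_d -> R)
    (Y : state N d -> state N d) : Prop :=
  (exists i k, Y = dp i k) \/ iter_br eps U G Y.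

Inductive lie_gen (V : normedModType R) (F : (V -> V) -> Prop) :
    (V -> V) -> Prop :=
  | lg_in Y : F Y -> lie_gen F Y
  | lg_add Y Z : lie_gen F Y -> lie_gen F Z -> lie_gen F (fun z => Y z + Z z)
  | lg_scale (c : R) Y : lie_gen F Y -> lie_gen F (fun z => c *: Y z)
  | lg_br Y Z : lie_gen F Y -> lie_gen F Z -> lie_gen F (lie_bracket Y Z).

End Defs.

From HB Require Import structures.
From mathcomp Require Import all_boot all_order all_algebra.
From mathcomp Require Import all_classical all_reals all_analysis.
From mathcomp Require Import ring.
Set Implicit Arguments.
Unset Strict Implicit.
Unset Printing Implicit Defensive.
Import Order.TTheory GRing.Theory Num.Theory.
Import numFieldNormedType.Exports.
Local Open Scope classical_set_scope.
Local Open Scope ring_scope.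

(* The force -grad U(q_i) - sum_j grad G(q_i - q_j) does not depend on p, so
   [d/dp_i^k, X_0] is the constant combination sum_l J_kl (d/dq_i^l - d/dp_i^l),
   where J is the Jacobian of the relativistic velocity p |-> p / g(p) at p_i,
   with g(p) = sqrt(1 + eps |p|^2):  J = g^-1 (I - eps/g^2 p p^T).  Since
   (I + eps p p^T)(I - eps/g^2 p p^T) = I, J is invertible with inverse
   g (I + eps p p^T); so these brackets together with the d/dp_i^k produce
   every d/dq_i^k, and the d/dq_i^k, d/dp_i^k span the tangent space. *)

Section derive_finite_span.
Context {R : realType} {V W : normedModType R}.

Lemma derive_finite_span (I : finType) (f : V -> W) (x v : V)
    (phi : I -> R -> R) (dphi : I -> R) (e : I -> W) :
  (forall h, f (h *: v + x) - f x = \sum_l (phi l h - phi l 0) *: e l) ->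
  (forall l, is_derive (0 : R) (1 : R) (phi l) (dphi l)) ->
  'D_v f x = \sum_l dphi l *: e l.
Proof.
move=> f_line dphi_def; apply: cvg_lim => //=.
under eq_fun do rewrite f_line scaler_sumr.
apply: cvg_big => [|l _]; first exact: add_continuous.
under eq_fun do rewrite scalerA.
apply: cvgZr_tmp; case: (dphi_def l) => dphi_cvg <-.
(* write [phi l h] as [phi l (h *: 1 + 0)], the difference quotient of 'D_1 *)
under eq_fun do rewrite -[X in phi l X]addr0 -[X in phi l (X + _)]mulr1.
exact: dphi_cvg.
Qed.
End derive_finite_span.

Section lie_values.
Context {R : realType} {V : normedModType R} (F : (V -> V) -> Prop) (z : V).

Definition lie_values : set V := [set Y z | Y in lie_gen F].

Lemma lie_values_gen Y : lie_gen F Y -> lie_values (Y z).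
Proof. exact: imageP. Qed.

Lemma lie_valuesD u w : lie_values u -> lie_values w -> lie_values (u + w).
Proof.
by move=> [Y FY <-] [Y' FY' <-]; exact: (lie_values_gen (lg_add FY FY')).
Qed.

Lemma lie_valuesZ c u : lie_values u -> lie_values (c *: u).
Proof. by move=> [Y FY <-]; exact: (lie_values_gen (lg_scale c FY)). Qed.

Lemma lie_values0 Y : F Y -> lie_values 0.
Proof.
by move=> FY; rewrite -(scale0r (Y z)); exact/lie_valuesZ/lie_values_gen/lg_in.
Qed.

Lemma lie_values_sum (I : Type) (r : seq I) (P : pred I) (f : I -> V) :
  lie_values 0 -> (forall i, P i -> lie_values (f i)) ->
  lie_values (\sum_(i <- r | P i) f i).
Proof. by move=> lv0 lvf; apply: big_ind => //; exact: lie_valuesD. Qed.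

End lie_values.

Section relativistic_velocity.
Variables (R : realType) (d : nat) (eps : R).
Hypothesis eps_ge0 : 0 <= eps.
Implicit Types p : 'rV[R]_d.

Definition lorentz_factor p : R := Num.sqrt (1 + eps * sqnorm p).

Definition relvel_jacobian p : 'M[R]_d :=
  (lorentz_factor p)^-1 *:
    (1%:M - (eps / lorentz_factor p ^+ 2) *: (p^T *m p)).

Definition relvel_jacobian_inv p : 'M[R]_d :=
  lorentz_factor p *: (1%:M + eps *: (p^T *m p)).

Lemma sqnorm_ge0 p : 0 <= sqnorm p.
Proof. by apply: sumr_ge0 => k _; exact: sqr_ge0. Qed.

Lemma lorentz_radicand_gt0 p : 0 < 1 + eps * sqnorm p.
Proof. by rewrite ltr_pwDl // mulr_ge0 // sqnorm_ge0. Qed.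

Lemma lorentz_factor_gt0 p : 0 < lorentz_factor p.
Proof. by rewrite sqrtr_gt0 lorentz_radicand_gt0. Qed.

Lemma sqr_lorentz_factor p : lorentz_factor p ^+ 2 = 1 + eps * sqnorm p.
Proof. by rewrite sqr_sqrtr // ltW // lorentz_radicand_gt0. Qed.

Lemma mul_row_tr_sqnorm p : p *m p^T = (sqnorm p)%:M.
Proof.
apply/matrixP => a b; rewrite !ord1 !mxE /=.
by apply: eq_bigr => k _; rewrite !mxE expr2.
Qed.

Lemma relvel_jacobian_mulVmx p :
  relvel_jacobian_inv p *m relvel_jacobian p = 1%:M.
Proof.
have g0 := lorentz_factor_gt0 p; set g := lorentz_factor p in g0 *.
set P := p^T *m p.
have PP : P *m P = sqnorm p *: P.
  by rewrite mulmxA -[p^T *m p *m p^T]mulmxA mul_row_tr_sqnorm mul_mx_scalar scalemxAl.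
rewrite /relvel_jacobian_inv /relvel_jacobian -/g -/P -scalemxAl -scalemxAr.
rewrite scalerA mulfV ?gt_eqF // scale1r mulmxDl mul1mx -scalemxAl mulmxBr.
rewrite mulmx1 -scalemxAr PP scalerBr !scalerA -scalerBl.
suff -> : eps - eps * (eps / g ^+ 2) * sqnorm p = eps / g ^+ 2 by rewrite subrK.
rewrite sqr_lorentz_factor; field.
by rewrite gt_eqF // lorentz_radicand_gt0.
Qed.

Lemma sqnorm_line p k h :
  sqnorm (p + h *: 'e_k) = sqnorm p + (2 * p 0 k * h + h ^+ 2).
Proof.
rewrite /sqnorm (bigD1 k) //= [in RHS](bigD1 k) //= !mxE eqxx mulr1.
rewrite (eq_bigr (fun m => p 0 m ^+ 2)) => [|m /negbTE mk]; last first.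
  by rewrite !mxE mk mulr0 addr0.
by rewrite addrAC; congr (_ + _); rewrite sqrrD; ring.
Qed.

Lemma is_derive_relvel_line p k l :
  is_derive (0 : R) (1 : R) (fun h => relvel eps (p + h *: 'e_k) 0 l)
    (relvel_jacobian p k l).
Proof.
have g0 := lorentz_factor_gt0 p; set g := lorentz_factor p in g0 *.
pose num : {poly R} := (p 0 l)%:P + (l == k)%:R *: 'X.
pose Q : {poly R} := (1 + eps * sqnorm p)%:P + eps *: (2 * p 0 k *: 'X + 'X^2).
have Q0 : Q.[0] = g ^+ 2.
  by rewrite /Q !hornerE /= !(mulr0, mul0r, addr0) sqr_lorentz_factor.
have -> : (fun h => relvel eps (p + h *: 'e_k) 0 l) =
    horner num * (fun h => ((Num.sqrt \o horner Q) h)^-1).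
  apply/funext => h; rewrite mulrfctE /= /num /Q !hornerE /relvel !mxE sqnorm_line.
  by rewrite mulrC [h * _]mulrC; congr (_ / Num.sqrt _); ring.
have Q0_gt0 : 0 < Q.[0] by rewrite Q0 exprn_gt0.
have dsqrtQ := is_derive1_comp (is_derive1_sqrt Q0_gt0) (is_derive_poly Q 0).
have sqrtQ0 : Num.sqrt Q.[0] = g by rewrite Q0 sqrtr_sqr gtr0_norm.
have sqrtQ0_neq0 : (Num.sqrt \o horner Q) 0 != 0 by rewrite /= sqrtQ0 gt_eqF.
have dinv := is_deriveV sqrtQ0_neq0 dsqrtQ.
apply: is_derive_eq (is_deriveM (is_derive_poly num 0) dinv) _.
rewrite /= sqrtQ0 /num /Q !(derivD, derivZ, derivC, derivX, derivXn).
rewrite !(hornerD, hornerZ, hornerC, hornerX, hornerMn, hornerXn, horner0).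
rewrite /relvel_jacobian !mxE big_ord1 !mxE -/g eq_sym /GRing.scale /=; field.
by rewrite gt_eqF.
Qed.
End relativistic_velocity.

Section drift_bracket.
Variables (R : realType) (N d : nat) (eps : R) (U G : 'rV[R]_d -> R).
Hypothesis eps_ge0 : 0 <= eps.
Implicit Types z : state R N d.

Definition dq_sub_dp (i : 'I_N) (l : 'I_d) : state R N d :=
  (delta_mx i l, - delta_mx i l).

Lemma row_line (p : 'M[R]_(N, d)) i k a h :
  row a (h *: delta_mx i k + p) = row a p + ((a == i)%:R * h) *: 'e_k.
Proof.
apply/rowP => b; rewrite !mxE eqxx addrC.
by case: (a == i); case: (b == k); rewrite /= ?(mulr0, mulr1, mul0r, mul1r).
Qed.

Lemma state_sum_delta (v : state R N d) :
  v = \sum_a \sum_b (v.1 a b *: (delta_mx a b, 0) + v.2 a b *: (0, delta_mx a b)).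
Proof.
apply: injective_projections; rewrite raddf_sum [LHS]matrix_sum_delta.
all: apply: eq_bigr => a _; rewrite raddf_sum; apply: eq_bigr => b _ /=.
all: by rewrite scaler0 ?addr0 ?add0r.
Qed.

Lemma drift_line z i k h :
  drift eps U G (h *: dp i k z + z) - drift eps U G z =
  \sum_l (relvel eps (row i z.2 + h *: 'e_k) 0 l - relvel eps (row i z.2) 0 l)
          *: dq_sub_dp i l.
Proof.
have relvel_incr a b : relvel eps (row a (h *: delta_mx i k + z.2)) 0 b -
    relvel eps (row a z.2) 0 b = \sum_l (relvel eps (row i z.2 + h *: 'e_k) 0 l
      - relvel eps (row i z.2) 0 l) * delta_mx i l a b.
  rewrite row_line (bigD1 b) //= big1 => [|l /negbTE lb]; last first.
    by rewrite [delta_mx _ _ _ _]mxE [b == l]eq_sym lb andbF mulr0.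
  rewrite [delta_mx _ _ _ _]mxE eqxx andbT addr0.
  case: (a =P i) => [->|_]; rewrite ?mul1r ?mulr1 ?mul0r ?mulr0 //.
  by rewrite scale0r addr0 subrr.
apply: injective_projections; rewrite raddf_sum /= [@relvel]lock in relvel_incr *.
all: apply/matrixP => a b.
  by rewrite summxE !mxE relvel_incr; apply: eq_bigr => l _; rewrite !mxE.
rewrite scaler0 add0r summxE !mxE.
have -> : forall x y c e : R, (- x - c - e) - (- y - c - e) = - (x - y).
  by move=> x y c e; ring.
by rewrite relvel_incr -sumrN; apply: eq_bigr => l _; rewrite !mxE mulrN.
Qed.

Lemma lie_bracket_dp_drift z i k :
  lie_bracket (dp i k) (drift eps U G) z =
  \sum_l relvel_jacobian eps (row i z.2) k l *: dq_sub_dp i l.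
Proof.
rewrite /lie_bracket [dp i k]/(cst (dp i k z)) derive_cst subr0.
apply: derive_finite_span => [h|l]; last exact: is_derive_relvel_line.
by rewrite drift_line scale0r addr0.
Qed.

Lemma dq_decomposition z i k :
  (delta_mx i k, 0) = \sum_j relvel_jacobian_inv eps (row i z.2) k j *:
                        lie_bracket (dp i j) (drift eps U G) z + dp i k z.
Proof.
have KJ l : \sum_j relvel_jacobian_inv eps (row i z.2) k j *
    relvel_jacobian eps (row i z.2) j l = (k == l)%:R.
  by have /matrixP/(_ k l) := relvel_jacobian_mulVmx eps_ge0 (row i z.2); rewrite !mxE.
under eq_bigr do rewrite lie_bracket_dp_drift scaler_sumr.
rewrite exchange_big /=.
under eq_bigr do under eq_bigr do rewrite scalerA.
under eq_bigr do rewrite -scaler_suml KJ.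
rewrite (bigD1 k) //= eqxx scale1r big1 => [|l /negbTE kl]; last first.
  by rewrite eq_sym kl scale0r.
by rewrite addr0 /dq_sub_dp /dp; apply: injective_projections; rewrite /= ?addr0 ?addNr.
Qed.
End drift_bracket.

Theorem lemma3p6 (R : realType) (N d : nat) (eps : R)
    (U G : 'rV[R]_d -> R) :
  (1 <= N)%N -> 0 < eps < 1 ->
  smooth_on [set: 'rV[R]_d] U ->
  smooth_on [set x : 'rV[R]_d | x != 0] G ->
  forall z : state R N d, config_dom z ->
  forall v : state R N d,
    exists (m : nat) (c : 'I_m -> R) (Y : 'I_m -> state R N d -> state R N d),
      (forall l, lie_gen (hormander_family eps U G) (Y l)) /\
      v = \sum_(l < m) c l *: Y l z.
Proof.
move=> _ /andP[eps_gt0 _] _ _ z _ v.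
set F := hormander_family eps U G.
have lv0 : lie_values F z 0.
  apply: (@lie_values0 _ _ F z (lie_bracket (drift eps U G) (drift eps U G))).
  by right; exact: (ib2 _ _ _ None None).
have dp_val i k : lie_values F z (dp i k z).
  by apply/lie_values_gen/lg_in; left; exists i, k.
have bracket_val i k : lie_values F z (lie_bracket (dp i k) (drift eps U G) z).
  by apply/lie_values_gen/lg_in; right; exact: (ib2 _ _ _ (Some (i, k)) None).
have [Y FY <-] : lie_values F z v.
  rewrite (state_sum_delta v); apply: lie_values_sum => // a _.
  apply: lie_values_sum => // b _.
  apply: lie_valuesD; apply: lie_valuesZ; last exact: dp_val.
  rewrite (dq_decomposition U G (ltW eps_gt0) z a b).
  apply: lie_valuesD => //; apply: lie_values_sum => // j _.
  exact: lie_valuesZ.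
by exists 1%N, (fun=> 1), (fun=> Y); rewrite big_ord1 scale1r.
Qed.
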